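(* In the setting described in the context, for every $\alpha\in(0,1)$ and every almost surely finite $(\mathcal F_T)$-stopping time $\tau$, with $\alpha^{\mathsf B}=m\alpha/(2k)$, we have $\mathrm{sFCR}(\alpha^{\mathsf B})\le\alpha$.
   Context: Setting: $(\Omega,\mathcal F,\mathbb P)$ is a probability space with a filtration $(\mathcal F_T)_{T\in\mathbb N}$; $k\ge2$, $m\in\{1,\dots,k-1\}$, $\alpha\in(0,1)$; $\theta_1\ge\dots\ge\theta_k$ are real parameters; $[k]=\{1,\dots,k\}$. For each $i\in[k]$ and $\beta\in(0,1)$, $(L_{iT}(\beta))_{T}$ and $(U_{iT}(\beta))_T$ are $(\mathcal F_T)$-adapted processes with values in $[-\infty,\infty]$, with $L_{iT}(\beta)\le U_{iT}(\beta)$, satisfying $\mathbb P(\exists T\in\mathbb N:\theta_i\le L_{iT}(\beta))\le\beta$ and $\mathbb P(\exists T\in\mathbb N:\theta_i\ge U_{iT}(\beta))\le\beta$. No dependence assumptions across $i$. SCS procedure: set $\alpha_{km}=\alpha/\{2m(k-m)\}$, $\hat{\mathcal S}_0=[k]$, and for $T\in\mathbb N$ let $L^{(m)}_T(\alpha_{km})$ be the $m$-th largest among $\{L_{iT}(\alpha_{km}):i\in\hat{\mathcal S}_{T-1}\}$ and $\hat{\mathcal S}_T=\hat{\mathcal S}_{T-1}\setminus\{i\in\hat{\mathcal S}_{T-1}:U_{iT}(\alpha_{km})<L^{(m)}_T(\alpha_{km})\}$. Stopped false coverage rate: for a stopping time $\tau$ and a level $a\in(0,1)$, $\mathrm{sFCR}(a)=\mathbb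 E\Big[\sum_{i\in\hat{\mathcal S}_\tau}\frac{\mathbb I\{\theta_i\notin(L_{i\tau}(a),U_{i\tau}(a))\}}{|\hat{\mathcal S}_\tau|}\Big]$. *)

From HB Require Import structures.
From mathcomp Require Import all_boot all_order all_algebra.
From mathcomp Require Import all_classical all_reals all_analysis.
From mathcomp Require Import measurable_realfun.
Set Implicit Arguments. Unset Strict Implicit. Unset Printing Implicit Defensive.
Import Order.TTheory GRing.Theory Num.Theory.
Local Open Scope classical_set_scope.
Local Open Scope ring_scope.

Definition filtration d (T : measurableType d) (F : nat -> set (set T)) :=
  (forall t, sigma_algebra setT (F t)) /\
  (forall t, F t `<=` measurable) /\
  (forall t, F t `<=` F t.+1).

Definition adapted d (T : measurableType d) (R : realType)
  (F : nat -> set (set T)) (X : nat -> T -> \bar R) :=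
  forall (t : nat) (B : set (\bar R)), measurable B -> F t (X t @^-1` B).

(** Stopping time with values in {1,2,...} \cup {+oo} (None = +oo):
    {tau <= n} \in F n for all n. *)
Definition stopping_time d (T : measurableType d)
  (F : nat -> set (set T)) (tau : T -> option nat) :=
  (forall w, tau w <> Some 0%N) /\
  (forall n, F n [set w | exists t, tau w = Some t /\ (t <= n)%N]).

(** m-th largest element of a finite list of extended reals (counted with
    multiplicity); -oo if the list has fewer than m elements. *)
Definition mth_largest (R : realType) (m : nat) (s : seq (\bar R)) : \bar R :=
  nth -oo%E (sort (fun x y : \bar R => (y <= x)%O) s) m.-1.

(** The SCS selected sets hat S_t (t = 0,1,2,...), computed pathwise,
    with level a (= alpha_km). *)
Fixpoint SCS d (T : measurableType d) (R : realType) (k m : nat)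
  (L U : 'I_k -> R -> nat -> T -> \bar R) (a : R) (t : nat) (w : T)
  : {set 'I_k} :=
  match t with
  | 0%N => [set: 'I_k]%SET
  | t'.+1 =>
      let S := SCS m L U a t' w in
      let Lm := mth_largest m [seq L i a t w | i <- enum S] in
      (S :\: [set i in S | (U i a t w < Lm)%E])%SET
  end.

Definition FCP d (T : measurableType d) (R : realType) (k : nat)
  (theta : 'I_k -> R) (L U : 'I_k -> R -> nat -> T -> \bar R)
  (S : nat -> T -> {set 'I_k}) (tau : T -> option nat) (a : R) (w : T) : R :=
  match tau w with
  | Some n =>
      (\sum_(i in S n w)
         (if ((L i a n w < (theta i)%:E)%E && ((theta i)%:E < U i a n w)%E)
          then 0 else 1)) / (#|S n w|)%:R
  | None => 0
  end.

Definition sFCR d (T : measurableType d) (R : realType) (P : probability T R)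
  (k : nat) (theta : 'I_k -> R) (L U : 'I_k -> R -> nat -> T -> \bar R)
  (S : nat -> T -> {set 'I_k}) (tau : T -> option nat) (a : R) : \bar R :=
  (\int[P]_w (FCP theta L U S tau a w)%:E)%E.

From HB Require Import structures.
From mathcomp Require Import all_boot all_order all_algebra.
From mathcomp Require Import all_classical all_reals all_analysis.
From mathcomp Require Import measurable_realfun.
From mathcomp Require Import ring lra.
Set Implicit Arguments. Unset Strict Implicit. Unset Printing Implicit Defensive.
Import Order.TTheory GRing.Theory Num.Theory.
Local Open Scope classical_set_scope.
Local Open Scope ring_scope.

(* SCS never eliminates the m indices with the largest current lower bounds,
   so at least m indices survive at every time.  Since tau >= 1, an index that
   is not covered at time tau witnesses the overshoot event {exists T >= 1,
   theta_i <= L_iT} or the undershoot event {exists T >= 1, U_iT <= theta_i}.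
   Hence, pathwise,
     FCP <= (1/|S_tau|) sum_{i in S_tau} (1_over_i + 1_under_i)
         <= (1/m) sum_i (1_over_i + 1_under_i),
   and taking expectations gives sFCR <= (1/m) k (2 alpha^B) = alpha. *)

Lemma mth_largest_count (R : realType) (m : nat) (s : seq (\bar R)) :
  (0 < m)%N -> (m <= size s)%N ->
  (m <= count (fun x => mth_largest m s <= x)%E s)%N.
Proof.
move=> m_gt0 m_le_s.
set r := fun x y : \bar R => (y <= x)%O.
have r_trans : transitive r by move=> x y z /= yx zy; exact: le_trans zy yx.
have r_refl : reflexive r by move=> x; exact: lexx.
set s' := sort r s.
have s'_sorted : sorted r s' by exact: sort_sorted.
have size_s' : size s' = size s by rewrite size_sort.
rewrite /mth_largest -/r -/s' -(permP (permEl (perm_sort r s))) -/s'.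
rewrite -[X in count _ X](cat_take_drop m s') count_cat.
apply: leq_trans (leq_addr _ _).
suff : all (fun x => nth -oo%E s' m.-1 <= x)%E (take m s').
  by rewrite all_count => /eqP ->; rewrite size_takel ?size_s'.
apply/(all_nthP -oo%E) => i; rewrite size_takel ?size_s' // => i_lt_m.
rewrite nth_take //; apply: (sorted_leq_nth r_trans r_refl -oo%E s'_sorted).
- by rewrite inE size_s' (leq_trans i_lt_m).
- by rewrite inE size_s' prednK.
- by rewrite -ltnS prednK.
Qed.

Lemma SCS_card_ge d (T : measurableType d) (R : realType) (k m : nat)
    (L U : 'I_k -> R -> nat -> T -> \bar R) (a : R) (w : T) :
  (0 < m)%N -> (m <= k)%N -> (forall i b t w, (L i b t w <= U i b t w)%E) ->
  forall t, (m <= #|SCS m L U a t w|)%N.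
Proof.
move=> m_gt0 m_le_k LU; elim=> [|t IH] /=; first by rewrite cardsT card_ord.
set S := SCS m L U a t w; set Lm := mth_largest m _.
pose top := [seq i <- enum S | (Lm <= L i a t.+1 w)%E].
have m_le_top : (m <= size top)%N.
  rewrite size_filter -(count_map (L^~ a ^~ t.+1 ^~ w)).
  by apply: mth_largest_count; rewrite // size_map -cardE.
apply: leq_trans m_le_top _; rewrite cardE; apply: uniq_leq_size.
  by rewrite filter_uniq ?enum_uniq.
move=> i; rewrite mem_filter mem_enum => /andP[Lm_le_Li iS].
rewrite mem_enum !inE iS andbT /= -leNgt.
exact: le_trans Lm_le_Li (LU _ _ _ _).
Qed.

Definition overshoot d (T : measurableType d) (R : realType)
    (X : nat -> T -> \bar R) (x : R) : set T :=
  [set w | exists t, (1 <= t)%N /\ (x%:E <= X t w)%E].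

Definition undershoot d (T : measurableType d) (R : realType)
    (X : nat -> T -> \bar R) (x : R) : set T :=
  [set w | exists t, (1 <= t)%N /\ (X t w <= x%:E)%E].

Lemma measurable_hitting d (T : measurableType d) (R : realType)
    (F : nat -> set (set T)) (X : nat -> T -> \bar R) (A : set (\bar R)) :
  (forall t, F t `<=` measurable) -> adapted F X -> measurable A ->
  measurable [set w | exists t, (1 <= t)%N /\ A (X t w)].
Proof.
move=> F_meas adX mA.
have -> : [set w | exists t, (1 <= t)%N /\ A (X t w)] =
          \bigcup_(t in [set t | (1 <= t)%N]) X t @^-1` A.
  by apply/seteqP; split=> w [t]; [case=> t1 Xt; exists t | exists t].
by apply: bigcup_measurable => t _; exact/F_meas/adX.
Qed.

Lemma measurable_overshoot d (T : measurableType d) (R : realType)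
    (F : nat -> set (set T)) (X : nat -> T -> \bar R) (x : R) :
  (forall t, F t `<=` measurable) -> adapted F X ->
  measurable (overshoot X x).
Proof.
move=> F_meas adX; apply: (measurable_hitting (A := [set y | x%:E <= y]%E) F_meas adX).
by rewrite -set_itvcy; exact: emeasurable_itv.
Qed.

Lemma measurable_undershoot d (T : measurableType d) (R : realType)
    (F : nat -> set (set T)) (X : nat -> T -> \bar R) (x : R) :
  (forall t, F t `<=` measurable) -> adapted F X ->
  measurable (undershoot X x).
Proof.
move=> F_meas adX; apply: (measurable_hitting (A := [set y | y <= x%:E]%E) F_meas adX).
by rewrite -set_itvNyc; exact: emeasurable_itv.
Qed.

(* Unlike [ge0_le_integral], no measurability is needed: the integral of a
   nonnegative function is a supremum over its simple minorants. *)
Lemma ge0_le_integralT d (T : measurableType d) (R : realType)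
    (mu : {measure set T -> \bar R}) (f g : T -> \bar R) :
  (forall x, (0 <= f x)%E) -> (forall x, (f x <= g x)%E) ->
  (\int[mu]_x f x <= \int[mu]_x g x)%E.
Proof.
move=> f_ge0 f_le_g.
have g_ge0 x : (0 <= g x)%E by exact: le_trans (f_ge0 x) (f_le_g x).
rewrite !ge0_integralTE //.
apply: ge_ereal_sup => _ [h h_le_f <-]; apply: ereal_sup_ubound.
by exists h => // x; exact: le_trans (h_le_f x) (f_le_g x).
Qed.

Lemma integral_sum_indicD d (T : measurableType d) (R : realType)
    (mu : {measure set T -> \bar R}) (I : finType) (A B : I -> set T) (c : R) :
  0 <= c -> (forall i, measurable (A i)) -> (forall i, measurable (B i)) ->
  (\int[mu]_x (c * \sum_i (\1_(A i) x + \1_(B i) x))%:E =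
   c%:E * \sum_i (mu (A i) + mu (B i)))%E.
Proof.
move=> c_ge0 mA mB.
have meas_indic (D : set T) :
    measurable D -> measurable_fun setT (fun x => (\1_D x : R)%:E).
  by move=> mD; apply/measurable_EFinP; exact: measurable_indic.
have ind_ge0 (D : set T) x : (0 <= (\1_D x : R)%:E)%E by rewrite lee_fin.
under eq_integral => x _.
  rewrite EFinM -sumEFin (eq_bigr (fun i => (\1_(A i) x)%:E + (\1_(B i) x)%:E)%E);
    last by move=> i _; rewrite EFinD.
  over.
rewrite ge0_integralZl ?lee_fin //; first last.
- by move=> x _; apply: sume_ge0 => i _; rewrite adde_ge0.
- by apply: emeasurable_sum => i; apply: emeasurable_funD; exact: meas_indic.
rewrite ge0_integral_sum //; last 2 first.
- by move=> i; apply: emeasurable_funD; exact: meas_indic.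
- by move=> i x _; rewrite adde_ge0.
congr (_ * _)%E; apply: eq_bigr => i _.
rewrite ge0_integralD //; try by [move=> x _; exact: ind_ge0 | exact: meas_indic].
by rewrite !integral_indic // !setIT.
Qed.

Lemma mean_over_large_set_le (I : finType) (R : numFieldType) (S : {set I})
    (m : nat) (c : I -> R) :
  (0 < m)%N -> (m <= #|S|)%N -> (forall i, 0 <= c i) ->
  (\sum_(i in S) c i) / #|S|%:R <= m%:R^-1 * \sum_i c i.
Proof.
move=> m_gt0 m_le_S c_ge0.
have sumS_ge0 : 0 <= \sum_(i in S) c i by exact: sumr_ge0.
rewrite mulrC; apply: ler_pM; rewrite ?invr_ge0 //.
  by rewrite lef_pV2 ?posrE ?ltr0n ?ler_nat // (leq_trans m_gt0).
by rewrite [leRHS](bigID (mem S)) /= lerDl sumr_ge0.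
Qed.

Lemma Bonferroni_level_gt0_lt1 (R : realFieldType) (k m : nat) (alpha : R) :
  (0 < m)%N -> (m <= k)%N -> 0 < alpha < 1 -> 0 < m%:R * alpha / (2 * k%:R) < 1.
Proof.
move=> m_gt0 m_le_k /andP[alpha_gt0 alpha_lt1].
have m_pos : 0 < m%:R :> R by rewrite ltr0n.
have k_pos : 0 < k%:R :> R by rewrite ltr0n (leq_trans m_gt0).
have m_le_kR : m%:R <= k%:R :> R by rewrite ler_nat.
by rewrite divr_gt0 ?mulr_gt0 //= ltr_pdivrMr ?mulr_gt0 // mul1r; nra.
Qed.

Lemma FCP_ge0 d (T : measurableType d) (R : realType) (k : nat)
    (theta : 'I_k -> R) (L U : 'I_k -> R -> nat -> T -> \bar R)
    (S : nat -> T -> {set 'I_k}) (tau : T -> option nat) (a : R) (w : T) :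
  0 <= FCP theta L U S tau a w.
Proof.
rewrite /FCP; case: (tau w) => // n.
by rewrite divr_ge0 // sumr_ge0 // => i _; case: ifP.
Qed.

Lemma FCP_le_miscoverage d (T : measurableType d) (R : realType) (k m : nat)
    (theta : 'I_k -> R) (L U : 'I_k -> R -> nat -> T -> \bar R)
    (S : nat -> T -> {set 'I_k}) (tau : T -> option nat) (a : R) (w : T) :
  (0 < m)%N -> (forall n, (m <= #|S n w|)%N) -> tau w <> Some 0%N ->
  FCP theta L U S tau a w <= m%:R^-1 *
    \sum_i (\1_(overshoot (L i a) (theta i)) w + \1_(undershoot (U i a) (theta i)) w).
Proof.
move=> m_gt0 S_large tau_ne0.
have ind_ge0 i : 0 <= \1_(overshoot (L i a) (theta i)) w +
  \1_(undershoot (U i a) (theta i)) w :> R by rewrite addr_ge0.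
rewrite /FCP; case tau_w: (tau w) => [n|]; last first.
  by rewrite mulr_ge0 ?invr_ge0 // sumr_ge0.
have n_gt0 : (0 < n)%N by rewrite lt0n; apply: contra_notN tau_ne0 => /eqP <-.
apply: le_trans _ (mean_over_large_set_le m_gt0 (S_large n) ind_ge0).
apply: ler_wpM2r; first by rewrite invr_ge0.
apply: ler_sum => i _; case: ifPn => [_|]; first exact: ind_ge0.
rewrite negb_and -!leNgt => /orP[theta_le_L|U_le_theta].
  by rewrite [X in X + _]indicE mem_set ?lerDl //; exists n.
by rewrite [X in _ + X]indicE mem_set ?lerDr //; exists n.
Qed.

Theorem theorem3 (d : measure_display) (T : measurableType d) (R : realType)
  (P : probability T R) (F : nat -> set (set T))
  (k m : nat) (theta : 'I_k -> R)
  (L U : 'I_k -> R -> nat -> T -> \bar R) :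
  filtration F ->
  (2 <= k)%N -> (1 <= m)%N -> (m <= k.-1)%N ->
  (forall i j : 'I_k, (i <= j)%N -> theta j <= theta i) ->
  (forall i beta, adapted F (L i beta)) ->
  (forall i beta, adapted F (U i beta)) ->
  (forall i beta t w, (L i beta t w <= U i beta t w)%E) ->
  (forall i beta, 0 < beta < 1 ->
     (P [set w | exists t, (1 <= t)%N /\ ((theta i)%:E <= L i beta t w)%E]
        <= beta%:E)%E) ->
  (forall i beta, 0 < beta < 1 ->
     (P [set w | exists t, (1 <= t)%N /\ ((theta i)%:E >= U i beta t w)%E]
        <= beta%:E)%E) ->
  forall (alpha : R), 0 < alpha < 1 ->
  forall tau : T -> option nat,
    stopping_time F tau ->
    P [set w | tau w = None] = 0%E ->
    let alpha_km := alpha / (2 * m%:R * (k%:R - m%:R)) in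
    let alphaB := m%:R * alpha / (2 * k%:R) in
    (sFCR P theta L U (SCS m L U alpha_km) tau alphaB <= alpha%:E)%E.
Proof.
move=> [_ [F_meas _]] k_ge2 m_gt0 m_lt_k _ adL adU LU L_bound U_bound
  alpha alpha01 tau [tau_ne0 _] _; cbv zeta.
set akm := alpha / _; set aB := m%:R * alpha / _.
have m_le_k : (m <= k)%N by rewrite (leq_trans m_lt_k) // leq_pred.
have k_gt0 : (0 < k)%N by rewrite (leq_trans _ k_ge2).
have aB01 : 0 < aB < 1 by exact: Bonferroni_level_gt0_lt1.
have mO i : measurable (overshoot (L i aB) (theta i)).
  exact: measurable_overshoot F_meas (adL i aB).
have mU i : measurable (undershoot (U i aB) (theta i)).
  exact: measurable_undershoot F_meas (adU i aB).
have FCP_le w : ((FCP theta L U (SCS m L U akm) tau aB w)%:E <= (m%:R^-1 *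
    \sum_i (\1_(overshoot (L i aB) (theta i)) w +
            \1_(undershoot (U i aB) (theta i)) w))%:E)%E.
  rewrite lee_fin; apply: FCP_le_miscoverage (tau_ne0 w) => // n.
  exact: SCS_card_ge.
have FCP_ge0E w : (0 <= (FCP theta L U (SCS m L U akm) tau aB w)%:E)%E.
  by rewrite lee_fin FCP_ge0.
apply: le_trans (ge0_le_integralT P FCP_ge0E FCP_le) _.
rewrite integral_sum_indicD ?invr_ge0 //.
apply: le_trans (_ : (m%:R^-1)%:E * \sum_(i < k) (aB + aB)%:E <= _)%E.
  apply: lee_wpmul2l; first by rewrite lee_fin invr_ge0.
  by apply: lee_sum => i _; rewrite EFinD leeD // ?L_bound ?U_bound.
rewrite sumEFin -EFinM lee_fin big_const_ord iter_addr addr0 /aB.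
rewrite [leLHS](_ : _ = alpha) //.
by field; rewrite !pnatr_eq0 -!lt0n m_gt0 k_gt0.
Qed.
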